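(* Let $\gamma\in(2/3,1)$ and consider the TBRW started at a finite initial condition $(T,x)$ with $\mathcal L_n=\mathrm{Ber}(n^{-\gamma})$. Then for every $\varepsilon<\frac{\gamma}{1-\gamma}-2$, \[ \mathbb P_{T,x;\mathcal L}\big(\Delta\tau_i<i^{1+\varepsilon}\text{ for infinitely many } i\big)=0 . \]
   Context: Tree Builder Random Walk (TBRW). Let $\mathcal L=(\mathcal L_n)_{n\ge1}$ be a sequence of probability laws on $\{0,1,2,\dots\}$ and let $(T_0,x_0)$ be an initial condition: $T_0$ is a finite rooted tree with a single self-loop attached at its root, and $x_0$ is a vertex of $T_0$. Let $(Z_n)_{n\ge1}$ be independent random variables with $Z_n\sim\mathcal L_n$. The TBRW is the process $((T_n,X_n))_{n\ge0}$ with $(T_0,X_0)=(T_0,x_0)$ where, for $n\ge1$, $T_n$ is obtained from $T_{n-1}$ by attaching $Z_n$ new leaves to $X_{n-1}$, and then $X_n$ is obtained by one step of simple random walk on $T_n$ from $X_{n-1}$ (self-loop counted twice in degrees; moves along a uniformly chosen edge-end). Its law is $\mathbb P_{T_0,x_0;\mathcal L}$. Growth times: $\tau_0=0$, $\tau_k=\inf\{n>\tau_{k-1}:Z_n\ge1\}$; $\Delta\tau_k=\tau_{k+1}-\tau_k$. *)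

From HB Require Import structures.
From mathcomp Require Import all_boot all_order all_algebra.
From mathcomp Require Import all_classical all_reals all_analysis.
Set Implicit Arguments. Unset Strict Implicit. Unset Printing Implicit Defensive.
Import Order.TTheory GRing.Theory Num.Theory.
Local Open Scope classical_set_scope.
Local Open Scope ring_scope.

(* Growth times of a TBRW, as a function of the sequence z = (Z_n)_{n>=1}
   of numbers of added leaves:
     tau_0 = 0,  tau_k = inf { n > tau_{k-1} : z n >= 1 }.
   [None] encodes tau_k = +oo (infimum of the empty set, or tau_{k-1} = +oo). *)
Fixpoint growth_time (z : nat -> nat) (k : nat) : option nat :=
  match k with
  | 0 => Some 0%N
  | k'.+1 =>
      match growth_time z k' with
      | None => None
      | Some t =>
          match pselect (exists n, (t < n)%N && (0 < z n)%N) with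
          | left h => Some (ex_minn h)
          | right _ => None
          end
      end
  end.

(* "Delta tau_i < i^(1+eps)", with Delta tau_i = tau_{i+1} - tau_i
   (false when tau_{i+1} = +oo, since then Delta tau_i = +oo). *)
Definition short_gap (R : realType) (eps : R) (z : nat -> nat) (i : nat) : Prop :=
  exists t t' : nat, growth_time z i = Some t /\ growth_time z i.+1 = Some t' /\
    ((t' - t)%:R : R) < (i%:R) `^ (1 + eps).

Definition short_gap_io (R : realType) (eps : R) (z : nat -> nat) : Prop :=
  forall N : nat, exists i : nat, (N <= i)%N /\ short_gap eps z i.

Definition bernoulli_growth_seq d (T : measurableType d) (R : realType)
    (P : probability T R) (gamma : R) (Z : nat -> T -> nat) : Prop :=
  (forall n k : nat, measurable (Z n @^-1` [set k])) /\
  (forall n : nat, (0 < n)%N ->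
     P (Z n @^-1` [set 1%N]) = ((n%:R : R) `^ (- gamma))%:E /\
     P (Z n @^-1` [set 0%N]) = (1 - (n%:R : R) `^ (- gamma))%:E) /\
  (forall (s : seq nat) (v : nat -> nat), uniq s -> all (fun i => 0 < i)%N s ->
     P (\big[setI/setT]_(i <- s) (Z i @^-1` [set v i])) =
     (\prod_(i <- s) P (Z i @^-1` [set v i]))%E).

From HB Require Import structures.
From mathcomp Require Import all_boot all_order all_algebra.
From mathcomp Require Import all_classical all_reals all_analysis.
From mathcomp Require Import ring lra measurable_realfun.
Set Implicit Arguments. Unset Strict Implicit. Unset Printing Implicit Defensive.
Import Order.TTheory GRing.Theory Num.Theory.
Local Open Scope classical_set_scope.
Local Open Scope ring_scope.

(* Pick e >= max(eps, 0) and a > 1 - gamma with a(1 + e) < 2 gamma - 1, which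
   is possible exactly because gamma > 2/3 and eps < gamma/(1 - gamma) - 2, and
   put sig = 2^a, q = sig^(1+e).  For the k-th dyadic block two events are
   unlikely: at least sig^(k+1) growth times before 2^(k+1) (Markov: the mean
   is O(2^((1-gamma)k))), and two growth times at distance at most q^(k+1), the
   first in [2^k, 2^(k+1)) (union bound with independence: probability
   O(2^k q^k 2^(-2 gamma k))).  Both decay geometrically in k, so by
   Borel-Cantelli only finitely many of them occur.  Outside them, if tau_i
   lies in block k then i <= sig^(k+1), so a gap tau_(i+1) - tau_i < i^(1+eps)
   <= q^(k+1) yields two close growth times in block k. *)

Lemma growth_timeSE (z : nat -> nat) k t' :
  growth_time z k.+1 = Some t' <->
  exists t, [/\ growth_time z k = Some t, (t < t')%N, (0 < z t')%N &
              forall n, (t < n < t')%N -> z n = 0%N].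
Proof.
rewrite /=; case: (growth_time z k) => [t|]; last by split=> // -[t [] ].
case: pselect => [ex|nex]; last first.
  split=> // -[_ [[<-] tt' zt' _]]; exfalso; apply: nex.
  by exists t'; rewrite tt' zt'.
case: ex_minnP => m /andP[tm zm] mmin; split.
  case=> <-; exists t; split=> // n /andP[tn nm]; apply/eqP.
  rewrite -leqn0 leqNgt; apply/negP => zn.
  by have := mmin n; rewrite tn zn leqNgt nm => /(_ isT).
case=> _ [[<-] tt' zt' zero]; congr Some; apply/eqP; rewrite eqn_leq.
rewrite mmin ?tt' //= leqNgt; apply/negP => t'm.
by move: zm; rewrite zero ?tm.
Qed.

Definition growth_count (z : nat -> nat) (t : nat) : nat :=
  \sum_(0 <= j < t) (0 < z j.+1)%N.

Lemma growth_count_mono z : {homo growth_count z : t u / (t <= u)%N}.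
Proof.
by move=> t u tu; rewrite /growth_count (big_cat_nat (leq0n t) tu) leq_addr.
Qed.

Lemma growth_count_le z t : (growth_count z t <= t)%N.
Proof.
rewrite /growth_count -[X in (_ <= X)%N]subn0 -[(t - 0)%N]muln1.
by rewrite -sum_nat_const_nat leq_sum // => j _; exact: leq_b1.
Qed.

Lemma growth_time_count z i t :
  growth_time z i = Some t -> growth_count z t = i.
Proof.
elim: i t => [t [<-]|i IH t']; first by rewrite /growth_count big_geq.
case/growth_timeSE => t [/IH cnt_t tt' zt' zero].
rewrite /growth_count (big_cat_nat (leq0n t) (ltnW tt')) -/(growth_count z t).
rewrite cnt_t -[i.+1]addn1; congr addn.
move: tt' zt' zero; case: t' => // t'; rewrite ltnS => tt' zt' zero.
rewrite big_nat_recr //= zt' big_nat_cond big1 // => j /andP[/andP[tj jt'] _].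
by rewrite zero // !ltnS tj.
Qed.

Lemma growth_time_pos z i t :
  (0 < i)%N -> growth_time z i = Some t -> (0 < z t)%N.
Proof. by case: i => // i _ /growth_timeSE [? []]. Qed.

Lemma growth_time_ltS z i t t' :
  growth_time z i = Some t -> growth_time z i.+1 = Some t' -> (t < t')%N.
Proof. by move=> gi /growth_timeSE [t0 []]; rewrite gi => -[<-]. Qed.

Section powR_facts.
Variable R : realType.
Implicit Types a g x y : R.

Lemma powRXn a x n : 0 <= a -> (a ^+ n) `^ x = (a `^ x) ^+ n.
Proof.
move=> a0; rewrite -powR_mulrn // -powRrM mulrC powRrM.
by rewrite powR_mulrn // powR_ge0.
Qed.

Lemma gt0_powRD a x y : 0 < a -> a `^ (x + y) = a `^ x * a `^ y.
Proof. by move=> a0; rewrite powRD // (gt_eqF a0) implybT. Qed.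

Lemma powR_gt1 a x : 1 < a -> 0 < x -> 1 < a `^ x.
Proof.
move=> a1 x0; rewrite /powR gt_eqF ?(lt_trans ltr01) // expR_gt1.
by rewrite mulr_gt0 // ln_gt0.
Qed.

Lemma powR_lt1 a x : 1 < a -> x < 0 -> a `^ x < 1.
Proof.
move=> a1 x0; rewrite /powR gt_eqF ?(lt_trans ltr01) // expR_lt1.
by rewrite pmulr_llt0 // ln_gt0.
Qed.

Lemma ler_powRN x y g : 0 < x -> x <= y -> 0 <= g -> y `^ (- g) <= x `^ (- g).
Proof.
move=> x0 xy g0; have y0 := lt_le_trans x0 xy.
rewrite !powRN lef_pV2 ?posrE ?powR_gt0 //.
by rewrite ge0_ler_powR // nnegrE ltW.
Qed.

Lemma powRN_le_dyadic g n k : 0 <= g -> (2 ^ k <= n)%N ->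
  (n%:R : R) `^ (- g) <= (2 `^ (- g)) ^+ k.
Proof.
by move=> g0 kn; rewrite -powRXn // -natrX ler_powRN ?ler_nat.
Qed.

Lemma sum_powRN_dyadic g k : 0 <= g -> g < 1 ->
  \sum_(0 <= j < 2 ^ k) (j.+1%:R : R) `^ (- g) <=
  2 `^ (1 - g) ^+ k.+1 / (2 `^ (1 - g) - 1).
Proof.
move=> g0 g1; set s := 2 `^ (1 - g).
have s1 : 1 < s by rewrite powR_gt1 ?ltr1n // subr_gt0.
have s2 : s = 2 * 2 `^ (- g) by rewrite /s gt0_powRD // powRr1.
elim: k => [|k IH].
  rewrite expn0 big_nat1 powR1 expr1 ler_pdivlMr ?subr_gt0 //; lra.
rewrite expnS mul2n -addnn (big_cat_nat (leq0n _) (leq_addr _ _)) /=.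
have block : \sum_(2 ^ k <= j < 2 ^ k + 2 ^ k) (j.+1%:R : R) `^ (- g) <= s ^+ k.
  apply: (@le_trans _ _ (\sum_(2 ^ k <= j < 2 ^ k + 2 ^ k) 2 `^ (- g) ^+ k)).
    rewrite !big_nat ler_sum // => j /andP[kj _].
    by rewrite powRN_le_dyadic // (leq_trans kj).
  by rewrite sumr_const_nat addnK s2 exprMn -[_ *+ 2 ^ k]mulr_natl natrX.
apply: (le_trans (lerD IH block)).
(* The bound absorbs the next block, whose sum is at most s^k, with slack s^k (s - 1). *)
have -> : s ^+ k.+2 / (s - 1) = s ^+ k.+1 / (s - 1) + s ^+ k + s ^+ k * (s - 1).
  by rewrite !exprS; field; rewrite subr_eq0 gt_eqF.
by rewrite lerDl mulr_ge0 ?exprn_ge0 ?subr_ge0 // ltW // (lt_trans ltr01).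
Qed.

End powR_facts.

Definition dyadic_pair (z : nat -> nat) (k L : nat) : Prop :=
  exists t t', [/\ (2 ^ k <= t < 2 ^ k.+1)%N, (t < t' <= t + L)%N,
                   (0 < z t)%N & (0 < z t')%N].

Lemma short_gap_dyadic (R : realType) (eps e sig : R) (z : nat -> nat) i :
  0 <= e -> eps <= e -> 0 <= sig -> (0 < i)%N -> short_gap eps z i ->
  exists2 k, (i < 2 ^ k.+1)%N &
    sig ^+ k.+1 <= (growth_count z (2 ^ k.+1))%:R \/
    dyadic_pair z k (Num.truncn ((sig `^ (1 + e)) ^+ k.+1)).
Proof.
move=> e0 epse sig0 i0 [t [t' [ti [ti' gap]]]].
have cnt_t := growth_time_count ti.
have it : (i <= t)%N by rewrite -cnt_t growth_count_le.
have /andP[kt tk] := trunc_log_bounds (ltnSn 1) (leq_trans i0 it).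
exists (trunc_log 2 t); first exact: leq_ltn_trans it tk.
set k := trunc_log 2 t in kt tk *.
have [|few] := leP (sig ^+ k.+1) (growth_count z (2 ^ k.+1))%:R; first by left.
right; have i_le : (i%:R : R) <= sig ^+ k.+1.
  by rewrite -cnt_t ltW // (le_lt_trans _ few) // ler_nat growth_count_mono // ltnW.
have gap_le : ((t' - t)%:R : R) <= (sig `^ (1 + e)) ^+ k.+1.
  rewrite -powRXn // ltW // (lt_le_trans gap) // (@le_trans _ _ (i%:R `^ (1 + e))) //.
    by apply: ler_powR; [rewrite ler1n | lra].
  by rewrite ge0_ler_powR ?nnegrE ?exprn_ge0 //; lra.
exists t, t'; split.
- by rewrite kt.
- rewrite (growth_time_ltS ti ti') -leq_subLR truncn_ge_nat //.
  by rewrite exprn_ge0 // powR_ge0.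
- exact: growth_time_pos ti.
- exact: growth_time_pos ti'.
Qed.

Section growth_events.
Context d (T : measurableType d) (Z : nat -> T -> nat).
Hypothesis mZ : forall n k, measurable (Z n @^-1` [set k]).

Definition growth_event j := [set w | (0 < Z j w)%N].

Definition pair_block k L := \big[setU/set0]_(n < 2 ^ k) \big[setU/set0]_(j < L)
  (growth_event (2 ^ k + n) `&` growth_event (2 ^ k + n + j.+1)).

Definition dyadic_bad_event (R : realType) (sig e : R) k :=
  [set w | sig ^+ k.+1 <= (growth_count (Z^~ w) (2 ^ k.+1))%:R] `|`
  pair_block k (Num.truncn ((sig `^ (1 + e)) ^+ k.+1)).

Lemma growth_eventE j : growth_event j = ~` (Z j @^-1` [set 0%N]).
Proof.
apply/seteqP; split => w; rewrite /growth_event /= lt0n; first by move/eqP.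
by move=> Zw0; apply/eqP.
Qed.

Lemma measurable_growth_event j : measurable (growth_event j).
Proof. by rewrite growth_eventE; exact/measurableC/mZ. Qed.

Lemma measurable_growth_time i t :
  measurable [set w | growth_time (Z^~ w) i = Some t].
Proof.
elim: i t => [[|t]|i IH t'] /=.
- by rewrite (_ : [set _ | _] = setT) //; apply/seteqP.
- by rewrite (_ : [set _ | _] = set0) //; apply/seteqP; split => // w [].
rewrite (_ : [set w | _] = \bigcup_(t in [set t | (t < t')%N])
   ([set w | growth_time (Z^~ w) i = Some t] `&` growth_event t' `&`
    \bigcap_(n in [set n | (t < n < t')%N]) (Z n @^-1` [set 0%N]))).
  apply: bigcup_measurable => t _; apply: measurableI; first apply: measurableI.
  - exact: IH.
  - exact: measurable_growth_event.
  - by apply: bigcap_measurableType => n _; exact: mZ.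
apply/seteqP; split => w.
  by case/growth_timeSE => t [gi tt' zt' zero]; exists t => //; split => // n /zero.
case=> t /= tt' [[gi zt'] zero]; apply/growth_timeSE.
by exists t; split => // n /zero.
Qed.

Lemma measurable_short_gap_io (R : realType) (eps : R) :
  measurable [set w | short_gap_io eps (Z^~ w)].
Proof.
rewrite (_ : [set w | _] = \bigcap_N \bigcup_(i in [set i | (N <= i)%N]) \bigcup_t
    \bigcup_(t' in [set t' | ((t' - t)%:R : R) < i%:R `^ (1 + eps)])
    ([set w | growth_time (Z^~ w) i = Some t] `&`
     [set w | growth_time (Z^~ w) i.+1 = Some t'])).
  apply: bigcapT_measurable => N; apply: bigcup_measurable => i _.
  apply: bigcupT_measurable => t; apply: bigcup_measurable => t' _.
  by apply: measurableI; exact: measurable_growth_time.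
apply/seteqP; split => w io N.
  have [i [Ni [t [t' [gi [gi' gap]]]]]] := io N.
  by exists i => //; exists t => //; exists t'.
have [i /= Ni [t _ [t' /= gap [gi gi']]]] := io N I.
by exists i; split => //; exists t, t'.
Qed.

Lemma growth_count_indic (R : realType) n w :
  ((growth_count (Z^~ w) n)%:R : R)%:E =
  (\sum_(0 <= j < n) (\1_(growth_event j.+1) w : R)%:E)%E.
Proof.
rewrite /growth_count sumEFin natr_sum; congr EFin; apply: eq_bigr => j _.
rewrite indicE; congr (nat_of_bool _)%:R.
by apply/idP/idP => h; [exact: mem_set | exact: set_mem].
Qed.

Lemma measurable_growth_count (R : realType) n :
  measurable_fun setT (fun w => ((growth_count (Z^~ w) n)%:R : R)%:E).
Proof.
rewrite (_ : (fun w => _) =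
    fun w => (\sum_(0 <= j < n) (\1_(growth_event j.+1) w : R)%:E)%E).
  apply: emeasurable_sum => j; apply/measurable_EFinP.
  exact/measurable_indic/measurable_growth_event.
by apply/funext => w; exact: growth_count_indic.
Qed.

Lemma measurable_growth_count_ge (R : realType) (c : R) n :
  measurable [set w | c <= (growth_count (Z^~ w) n)%:R].
Proof.
rewrite (_ : [set w | _] =
    setT `&` [set w | (c%:E <= ((growth_count (Z^~ w) n)%:R)%:E)%E]).
  exact/emeasurable_fun_c_infty/measurable_growth_count.
by apply/seteqP; split => w; rewrite /= lee_fin // => -[].
Qed.

Lemma measurable_pair_block k L : measurable (pair_block k L).
Proof.
apply: bigsetU_measurable => n _; apply: bigsetU_measurable => j _.
by apply: measurableI; exact: measurable_growth_event.
Qed.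

Lemma dyadic_pair_block k L w : dyadic_pair (Z^~ w) k L -> pair_block k L w.
Proof.
case=> t [t' [/andP[kt tk] /andP[tt' t'L] zt zt']].
have dL : (t' - t <= L)%N by rewrite leq_subLR.
rewrite /pair_block -(bigcup_mkord _ (fun n => \big[setU/set0]_(j < L)
  (growth_event (2 ^ k + n) `&` growth_event (2 ^ k + n + j.+1)))).
exists (t - 2 ^ k)%N; first by rewrite /= ltn_subLR // addnn -mul2n -expnS.
rewrite /= subnKC // -(bigcup_mkord _ (fun j =>
  growth_event t `&` growth_event (t + j.+1))).
exists (t' - t).-1; first by rewrite /= (leq_trans _ dL) // ltn_predL subn_gt0.
by rewrite /= prednK ?subn_gt0 // subnKC ?(ltnW tt').
Qed.

Lemma measurable_dyadic_bad_event (R : realType) (sig e : R) k :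
  measurable (dyadic_bad_event sig e k).
Proof.
apply: measurableU; first exact: measurable_growth_count_ge.
exact: measurable_pair_block.
Qed.

Lemma short_gap_io_sub_lim_sup (R : realType) (eps e sig : R) :
  0 <= e -> eps <= e -> 0 <= sig ->
  [set w | short_gap_io eps (Z^~ w)] `<=` lim_sup_set (dyadic_bad_event sig e).
Proof.
move=> e0 epse sig0 w io n _.
have [i [ni gap]] := io (2 ^ n.+1)%N.
have i0 : (0 < i)%N by rewrite (leq_trans _ ni) // expn_gt0.
have [k ik bad] := short_gap_dyadic e0 epse sig0 i0 gap.
exists k.
  by apply: ltnW; rewrite -ltnS -(ltn_exp2l _ _ (ltnSn 1)) (leq_ltn_trans ni ik).
by case: bad => [?|/dyadic_pair_block]; [left | right].
Qed.

End growth_events.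

Lemma lim_sup_set_measurable d (T : measurableType d) (F : (set T)^nat) :
  (forall k, measurable (F k)) -> measurable (lim_sup_set F).
Proof.
move=> mF; apply: bigcapT_measurable => n.
by apply: bigcup_measurable => k _; exact: mF.
Qed.

Lemma lim_sup_set_geometric0 d (T : measurableType d) (R : realType)
    (mu : measure T R) (F : (set T)^nat) (c x : R) :
  (forall k, measurable (F k)) -> 0 <= c -> 0 < x -> x < 1 ->
  (forall k, (mu (F k) <= (c * x ^+ k)%:E)%E) -> mu (lim_sup_set F) = 0%E.
Proof.
move=> mF c0 x0 x1 muF; apply: lim_sup_set_cvg0 => //.
apply: le_lt_trans; first apply: (lee_nneseries (v := fun k => (c * x ^+ k)%:E)).
- by move=> *; exact: measure_ge0.
- by move=> k _; exact: muF.
apply: (@le_lt_trans _ _ (c / (1 - x))%:E); last exact: ltry.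
apply: lime_le.
  by apply: is_cvg_nneseries => k _ _; rewrite lee_fin mulr_ge0 // exprn_ge0 // ltW.
apply: nearW => n; rewrite sumEFin lee_fin.
have nx : `|x| < 1 by rewrite ger0_norm // ltW.
by have := geometric_le_lim n c0 x0 nx; rewrite /series /= /geometric.
Qed.

Section bernoulli_growth.
Context d (T : measurableType d) (R : realType) (P : probability T R)
  (gamma : R) (Z : nat -> T -> nat).
Hypotheses (hZ : bernoulli_growth_seq P gamma Z) (gamma_ge0 : 0 <= gamma).

Let mZ n k : measurable (Z n @^-1` [set k]).
Proof. by case: hZ => mZ _; exact: mZ. Qed.

Lemma prob_growth_event j : (0 < j)%N ->
  P (growth_event Z j) = ((j%:R : R) `^ (- gamma))%:E.
Proof.
move=> j0; have [_ [law _]] := hZ; have [_ law0] := law j j0.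
rewrite growth_eventE probability_setC ?law0; last exact: mZ.
by rewrite -[1%E]/(1%:E) -EFinB subKr.
Qed.

Lemma prob_Z_notin01 j : (0 < j)%N ->
  P (~` (Z j @^-1` [set 0%N] `|` Z j @^-1` [set 1%N])) = 0%E.
Proof.
move=> j0; have [_ [law _]] := hZ; have [law1 law0] := law j j0.
rewrite probability_setC; last by apply: measurableU; exact: mZ.
rewrite measureU; [|exact: mZ|exact: mZ|]; last first.
  by apply/seteqP; split => w //= [->].
by move: law0 law1; rewrite /preimage /= => -> ->; rewrite -EFinD subrK subrr.
Qed.

Lemma prob_growth_event2 a b : (0 < a)%N -> (a < b)%N ->
  (P (growth_event Z a `&` growth_event Z b) <=
   ((a%:R : R) `^ (- gamma) * (b%:R : R) `^ (- gamma))%:E)%E.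
Proof.
move=> a0 ab; have b0 := ltn_trans a0 ab; have [_ [law indep]] := hZ.
pose ones := Z a @^-1` [set 1%N] `&` Z b @^-1` [set 1%N].
pose other j := ~` (Z j @^-1` [set 0%N] `|` Z j @^-1` [set 1%N]).
have m_ones : measurable ones by apply: measurableI; exact: mZ.
have m_other j : measurable (other j).
  by apply/measurableC/measurableU; exact: mZ.
(* Independence is only assumed for the level sets of the Z_i, and Z_j takes
   values in {0, 1} only almost surely. *)
have P_ones : P ones = ((a%:R : R) `^ (- gamma) * (b%:R : R) `^ (- gamma))%:E.
  have := indep [:: a; b] (fun=> 1%N).
  rewrite !big_cons !big_nil setIT mule1 (proj1 (law a a0)) (proj1 (law b b0)).
  by rewrite -EFinM; apply; rewrite /= ?inE ?andbT ?neq_ltn ?ab ?a0 ?b0.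
have sub : growth_event Z a `&` growth_event Z b `<=` ones `|` (other a `|` other b).
  move=> w [za zb]; rewrite /growth_event /= in za zb.
  case: (Z a w =P 1%N) => [a1|a1]; last by right; left => -[/= a0'|//]; rewrite a0' in za.
  case: (Z b w =P 1%N) => [b1|b1]; last by right; right => -[/= b0'|//]; rewrite b0' in zb.
  by left.
have m_others : measurable (other a `|` other b) by exact: measurableU.
have null : P (other a `|` other b) = 0%E.
  by apply: null_set_setU => //; exact: prob_Z_notin01.
have le_union : (P (growth_event Z a `&` growth_event Z b) <=
                 P (ones `|` (other a `|` other b)))%E.
  apply: le_measure sub; rewrite inE; last exact: measurableU.
  by apply: measurableI; exact: measurable_growth_event mZ _.
by rewrite (le_trans le_union) // (measureU0 m_ones m_others null) -P_ones.
Qed.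

Lemma prob_growth_count_ge (c : R) n : 0 < c ->
  (P [set w | (c <= (growth_count (Z^~ w) n)%:R)%R] <=
   (c^-1 * \sum_(0 <= j < n) (j.+1%:R : R) `^ (- gamma))%:E)%E.
Proof.
move=> c0; rewrite EFinM lee_pdivlMl //.
have := le_integral_comp_abse P measurableT (f := id) (@measurable_id _ _ setT)
  (fun _ h => h) (fun _ _ _ _ h => h) (measurable_growth_count mZ n) c0.
rewrite (_ : [set: T] `&` _ = [set w | c <= (growth_count (Z^~ w) n)%:R]); last first.
  by apply/seteqP; split => w /=; rewrite ger0_norm ?ler0n ?lee_fin // => -[].
move/le_trans; apply.
rewrite (eq_integral (fun w => \sum_(0 <= j < n) (\1_(growth_event Z j.+1) w : R)%:E)%E); last first.
  by move=> w _; rewrite gee0_abs ?lee_fin // growth_count_indic.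
rewrite ge0_integral_sum //; last first.
  by move=> j; apply/measurable_EFinP; exact/measurable_indic/(measurable_growth_event mZ).
rewrite -sumEFin lee_sum // => j _.
rewrite integral_indic ?setIT //; last exact: measurable_growth_event mZ _.
by rewrite -(prob_growth_event (ltn0Sn j)).
Qed.

Lemma prob_pair_block k L :
  (P (pair_block Z k L) <= (L%:R * (2 * 2 `^ (- gamma) ^+ 2) ^+ k)%:E)%E.
Proof.
set r : R := 2 `^ (- gamma).
have pair n j : (P (growth_event Z (2 ^ k + n) `&` growth_event Z (2 ^ k + n + j.+1))
    <= (r ^+ k * r ^+ k)%:E)%E.
  apply: (le_trans (prob_growth_event2 _ _)).
  - by rewrite addn_gt0 expn_gt0.
  - by rewrite addnS ltnS leq_addr.
  by rewrite lee_fin ler_pM ?powR_ge0 ?powRN_le_dyadic // -?addnA leq_addr.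
have -> : L%:R * (2 * r ^+ 2) ^+ k = \sum_(n < 2 ^ k) \sum_(j < L) r ^+ k * r ^+ k.
  rewrite !sumr_const !card_ord -mulrnA -[_ *+ (L * 2 ^ k)]mulr_natl natrM natrX.
  by rewrite exprMn -exprM mul2n -addnn exprD !mulrA.
pose E n j := growth_event Z (2 ^ k + n) `&` growth_event Z (2 ^ k + n + j.+1).
have mE n j : measurable (E n j).
  by apply: measurableI; exact: measurable_growth_event mZ _.
apply: (le_trans (@Boole_inequality _ _ _ P
  (fun n => \big[setU/set0]_(j < L) E n j) (2 ^ k) _)).
  by move=> n _; apply: bigsetU_measurable => j _.
rewrite -sumEFin lee_sum // => n _.
apply: (le_trans (@Boole_inequality _ _ _ P (E n) L _)) => //.
by rewrite -sumEFin lee_sum // => j _; exact: pair.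
Qed.

Lemma prob_growth_count_dyadic (sig : R) k : 0 < sig -> gamma < 1 ->
  (P [set w | (sig ^+ k.+1 <= (growth_count (Z^~ w) (2 ^ k.+1))%:R)%R] <=
   (2 `^ (1 - gamma) / (2 `^ (1 - gamma) - 1) *
    (2 `^ (1 - gamma) / sig) ^+ k.+1)%:E)%E.
Proof.
move=> sig0 g1; set s := 2 `^ (1 - gamma).
have s1 : 1 < s by rewrite powR_gt1 ?ltr1n // subr_gt0.
apply: (le_trans (prob_growth_count_ge _ (exprn_gt0 k.+1 sig0))).
rewrite lee_fin (le_trans (ler_wpM2l _ (sum_powRN_dyadic k.+1 gamma_ge0 g1))) //.
  by rewrite invr_ge0 exprn_ge0 // ltW.
rewrite exprMn exprVn le_eqVlt; apply/orP; left; apply/eqP.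
by rewrite /s !exprS; field; rewrite !gt_eqF ?exprn_gt0 ?subr_gt0.
Qed.

Lemma prob_dyadic_bad_event (sig e : R) k : 0 < sig -> gamma < 1 ->
  (P (dyadic_bad_event Z sig e k) <=
   (2 `^ (1 - gamma) / (2 `^ (1 - gamma) - 1) * (2 `^ (1 - gamma) / sig) ^+ k.+1 +
    sig `^ (1 + e) * (2 * 2 `^ (- gamma) ^+ 2 * sig `^ (1 + e)) ^+ k)%:E)%E.
Proof.
move=> sig0 g1; set q := sig `^ (1 + e).
have L_le : ((Num.truncn (q ^+ k.+1))%:R : R) <= q ^+ k.+1.
  by rewrite truncn_le exprn_ge0 // powR_ge0.
apply: (le_trans (measureU2 _ (measurable_growth_count_ge mZ _ _)
                               (measurable_pair_block mZ _ _))).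
apply: (le_trans (leeD (prob_growth_count_dyadic k sig0 g1) (prob_pair_block k _))).
rewrite -EFinD lee_fin lerD2l (le_trans (ler_wpM2r _ L_le)) //.
by rewrite exprS -[q * _ * _]mulrA -exprMn [q * (2 * _)]mulrC.
Qed.

Lemma dyadic_bad_event_null (a e : R) :
  gamma < 1 -> 0 <= e -> 1 - gamma < a -> a * (1 + e) < 2 * gamma - 1 ->
  P (lim_sup_set (dyadic_bad_event Z (2 `^ a) e)) = 0%E.
Proof.
move=> g1 e0 a_gt a_lt; have sig0 : 0 < 2 `^ a :> R by rewrite powR_gt0.
set s := 2 `^ (1 - gamma).
have s1 : 1 < s by rewrite powR_gt1 ?ltr1n // subr_gt0.
set rho1 := s / 2 `^ a; set rho2 := 2 * 2 `^ (- gamma) ^+ 2 * 2 `^ a `^ (1 + e).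
have rho1E : rho1 = 2 `^ (1 - gamma - a).
  by rewrite /rho1 /s -[1 - gamma](subrK a) gt0_powRD // mulfK ?gt_eqF // addrK.
have rho2E : rho2 = 2 `^ (1 + (- gamma + (- gamma + a * (1 + e)))).
  by rewrite /rho2 -powRrM !gt0_powRD // powRr1 // expr2 !mulrA.
have rho1_gt0 : 0 < rho1 by rewrite rho1E powR_gt0.
have rho2_ge0 : 0 <= rho2 by rewrite rho2E powR_ge0.
have rho1_lt1 : rho1 < 1 by rewrite rho1E powR_lt1 ?ltr1n //; lra.
have rho2_lt1 : rho2 < 1 by rewrite rho2E powR_lt1 ?ltr1n //; lra.
have C_ge0 : 0 <= s / (s - 1) by rewrite divr_ge0 ?subr_ge0 ?ltW // (lt_trans ltr01).
set rho := Num.max rho1 rho2.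
apply: (lim_sup_set_geometric0 (c := s / (s - 1) * rho1 + 2 `^ a `^ (1 + e)) (x := rho)).
- by move=> k; apply: (measurable_dyadic_bad_event mZ).
- by rewrite addr_ge0 ?powR_ge0 // mulr_ge0 // ltW.
- by rewrite lt_max rho1_gt0.
- by rewrite gt_max rho1_lt1.
move=> k; have le_rho x : 0 <= x -> x <= rho -> x ^+ k <= rho ^+ k.
  by move=> x0 x_rho; apply: lerXn2r; rewrite ?nnegrE // (le_trans x0 x_rho).
apply: (le_trans (prob_dyadic_bad_event e k sig0 g1)).
rewrite -/s -/rho1 -/rho2 lee_fin mulrDl exprS mulrA lerD //.
  rewrite ler_wpM2l ?(mulr_ge0 C_ge0 (ltW rho1_gt0)) // le_rho ?(ltW rho1_gt0) //.
  by rewrite /rho le_max lexx.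
by rewrite ler_wpM2l ?powR_ge0 // le_rho // /rho le_max lexx orbT.
Qed.

End bernoulli_growth.

Lemma exists_dyadic_exponents (R : realType) (gamma eps : R) :
  2 / 3 < gamma -> gamma < 1 -> eps < gamma / (1 - gamma) - 2 ->
  exists e a : R,
    [/\ 0 <= e, eps <= e, 1 - gamma < a & a * (1 + e) < 2 * gamma - 1].
Proof.
move=> g23 g1 heps; set e := Num.max eps 0.
have [eps_e e0] : eps <= e /\ 0 <= e by rewrite /e !le_max !lexx orbT.
have slack : (1 - gamma) * (1 + e) < 2 * gamma - 1.
  set odds := gamma / (1 - gamma) in heps *.
  have oddsE : odds * (1 - gamma) = gamma by rewrite mulfVK //; apply/eqP; lra.
  have odds_gt2 : 2 < odds by nra.
  have e_lt : e < odds - 2 by rewrite /e; case: (leP eps 0) => _; lra.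
  nra.
exists e, ((1 - gamma + (2 * gamma - 1) / (1 + e)) / 2); split => //.
  by move: slack; rewrite -ltr_pdivlMr; lra.
rewrite mulrAC mulrDl mulfVK; last by apply/eqP; lra.
lra.
Qed.

Theorem lemma4p2 (d : measure_display) (T : measurableType d) (R : realType)
    (P : probability T R) (gamma eps : R) (Z : nat -> T -> nat) :
  2 / 3 < gamma -> gamma < 1 ->
  bernoulli_growth_seq P gamma Z ->
  eps < gamma / (1 - gamma) - 2 ->
  P [set w | short_gap_io eps (fun n => Z n w)] = 0%E.
Proof.
move=> g23 g1 hZ heps.
have [e [a [e0 eps_e a_gt a_lt]]] := exists_dyadic_exponents g23 g1 heps.
have mZ : forall n k, measurable (Z n @^-1` [set k]) by case: hZ.
apply: (subset_measure0 (measurable_short_gap_io mZ eps)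
  (lim_sup_set_measurable (measurable_dyadic_bad_event mZ (2 `^ a) e))
  (short_gap_io_sub_lim_sup e0 eps_e (powR_ge0 2 a))).
have g0 : 0 <= gamma by lra.
exact: (dyadic_bad_event_null hZ g0 g1 e0 a_gt a_lt).
Qed.
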